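(* Let $n \ge d \ge 1$ and $K\ge 1$. Let $A_+^1,\ldots,A_+^K$ be $n\times n$ real symmetric positive semi-definite matrices and let $\Lambda^1,\ldots,\Lambda^K\in\Delta_+^d$. Let $U^{\mathrm{old}} \in \mathbb{R}^{n\times d}$ satisfy $(U^{\mathrm{old}})^T U^{\mathrm{old}} = I_d$. Let $M = \sum_{k=1}^K A_+^k U^{\mathrm{old}}\Lambda^k \in \mathbb{R}^{n\times d}$ and let $M = B\Sigma C^T$ be a (thin) singular value decomposition, with $B\in\mathbb{R}^{n\times d}$ having orthonormal columns (left singular vectors), $C\in\mathbb{R}^{d\times d}$ orthogonal (right singular vectors), and $\Sigma$ diagonal with nonnegative entries. Set $U^{\mathrm{new}} \equiv BC^T$. Then $(U^{\mathrm{new}})^TU^{\mathrm{new}} = I_d$ and $$\sum_{k=1}^K \left\| A_+^k - U^{\mathrm{new}}\Lambda^k (U^{\mathrm{new}})^T\right\|_F^2 \le \sum_{k=1}^K \left\| A_+^k - U^{\mathrm{old}}\Lambda^k (U^{\mathrm{old}})^T\right\|_F^2.$$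
   Context: $\Delta_+^d$ denotes the set of $d\times d$ real diagonal matrices whose diagonal entries are all nonnegative. $\|\cdot\|_F$ is the Frobenius norm. In the paper, each $A_+^k$ is the positive semi-definite part of a symmetric adjacency matrix $A^k$: if $A^k = VDV^T$ is an eigendecomposition, then $A_+^k = V D_+ V^T$ with $(D_+)_{ii}=\max(D_{ii},0)$. *)

From HB Require Import structures.
From mathcomp Require Import all_boot all_order all_algebra.
Set Implicit Arguments. Unset Strict Implicit. Unset Printing Implicit Defensive.
Import Order.TTheory GRing.Theory Num.Theory.
Local Open Scope ring_scope.

Definition frob2 (R : numDomainType) (m n : nat) (X : 'M[R]_(m, n)) : R :=
  \sum_(i < m) \sum_(j < n) X i j ^+ 2.

Definition psd_mx (R : numDomainType) (n : nat) (A : 'M[R]_n) : Prop :=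
  A^T = A /\ forall x : 'cV[R]_n, 0 <= (x^T *m A *m x) 0 0.

Definition diag_nonneg (R : numDomainType) (d : nat) (L : 'M[R]_d) : Prop :=
  is_diag_mx L /\ forall i : 'I_d, 0 <= L i i.

(** The rotation step decreases the objective because, for orthonormal U,
    [sum_k ||A_k - U L_k U^T||_F^2] equals a constant minus
    [2 g(U)] with [g(U) = sum_k tr(U^T A_k U L_k)].  Each term of [g] is a
    positive semi-definite quadratic form in [U], so [g] is convex and lies
    above its tangent at [Uold], whose slope is [2 M].  Hence
    [g(Unew) >= g(Uold) + 2 tr((Unew - Uold)^T M)], and the last trace is
    nonnegative because [Unew = B C^T] solves the orthogonal Procrustes
    problem [max tr(U^T M)]: [tr(Unew^T M) = tr Sigma], whereas
    [tr(U^T M) = sum_i ((U C)^T B)_ii Sigma_ii <= tr Sigma] by Cauchy-Schwarz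
    on unit columns. *)

From HB Require Import structures.
From mathcomp Require Import all_boot all_order all_algebra.
From mathcomp Require Import ring lra.
Import Order.TTheory GRing.Theory Num.Theory.
Local Open Scope ring_scope.
Set Implicit Arguments.

Section FrobeniusTrace.
Variable R : realFieldType.

Lemma diag_mx_tr d (L : 'M[R]_d) : is_diag_mx L -> L^T = L.
Proof. by case/diag_mxP=> e ->; rewrite tr_diag_mx. Qed.

Lemma mxtrace_mul_diag d (X L : 'M[R]_d) :
  is_diag_mx L -> \tr (X *m L) = \sum_i X i i * L i i.
Proof.
case/diag_mxP=> e ->; rewrite mul_mx_diag /mxtrace.
by apply: eq_bigr => i _; rewrite !mxE eqxx mulr1n.
Qed.

Lemma frob2_mxtrace m n (X : 'M[R]_(m, n)) : frob2 X = \tr (X^T *m X).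
Proof.
rewrite /frob2 /mxtrace exchange_big; apply: eq_bigr => j _.
by rewrite mxE; apply: eq_bigr => i _; rewrite mxE expr2.
Qed.

Lemma orthonormal_mulmx n d p (U : 'M[R]_(n, d)) (Q : 'M[R]_(d, p)) :
  U^T *m U = 1%:M -> Q^T *m Q = 1%:M -> (U *m Q)^T *m (U *m Q) = 1%:M.
Proof.
by move=> HU HQ; rewrite trmx_mul mulmxA -(mulmxA Q^T) HU mulmx1 HQ.
Qed.

Lemma frob2_sub_orthonormal_conj n d (A : 'M[R]_n) (U : 'M[R]_(n, d))
    (L : 'M[R]_d) :
  A^T = A -> L^T = L -> U^T *m U = 1%:M ->
  frob2 (A - U *m L *m U^T)
    = \tr (A *m A) - 2 * \tr (U^T *m A *m U *m L) + \tr (L *m L).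
Proof.
move=> HA HL HU; rewrite frob2_mxtrace.
have HP : (U *m L *m U^T)^T = U *m L *m U^T.
  by rewrite !trmx_mul trmxK HL mulmxA.
rewrite [(_ - _)^T]linearB /= HA HP mulmxBl !mulmxBr !linearB /=.
have cross1 : \tr (A *m (U *m L *m U^T)) = \tr (U^T *m A *m U *m L).
  by rewrite !mulmxA [LHS]mxtrace_mulC !mulmxA.
have cross2 : \tr (U *m L *m U^T *m A) = \tr (U^T *m A *m U *m L).
  by rewrite mxtrace_mulC cross1.
have square : \tr (U *m L *m U^T *m (U *m L *m U^T)) = \tr (L *m L).
  rewrite mxtrace_mulC !mulmxA -(mulmxA _ U^T U) HU mulmx1.
  by rewrite [LHS]mxtrace_mulC !mulmxA HU mul1mx.
rewrite cross1 cross2 square; ring.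
Qed.

End FrobeniusTrace.

Section Convexity.
Variables (R : realFieldType) (n d : nat) (A : 'M[R]_n) (L : 'M[R]_d).
Hypotheses (psdA : psd_mx A) (nnegL : diag_nonneg L).

Lemma psd_mx_conj_diag_ge0 (D : 'M[R]_(n, d)) i : 0 <= (D^T *m A *m D) i i.
Proof.
have := psdA.2 (col i D).
suff -> : ((col i D)^T *m A *m col i D) 0 0 = (D^T *m A *m D) i i by [].
rewrite !mxE; apply: eq_bigr => k _; rewrite !mxE; congr (_ * _).
by apply: eq_bigr => j _; rewrite !mxE.
Qed.

Lemma mxtrace_conj_tangent_le (U V : 'M[R]_(n, d)) :
  \tr (U^T *m A *m U *m L) + 2 * \tr ((V - U)^T *m (A *m U *m L))
    <= \tr (V^T *m A *m V *m L).
Proof.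
set D := V - U; have -> : V = U + D by rewrite /D addrC subrK.
clearbody D.
rewrite [(_ + _)^T]linearD /= !(mulmxDl, mulmxDr, mxtraceD).
have cross1 : \tr (U^T *m A *m D *m L) = \tr (D^T *m (A *m U *m L)).
  rewrite -mxtrace_tr !trmx_mul trmxK diag_mx_tr ?nnegL.1 // psdA.1.
  by rewrite [LHS]mxtrace_mulC !mulmxA.
have cross2 : \tr (D^T *m A *m U *m L) = \tr (D^T *m (A *m U *m L)).
  by rewrite !mulmxA.
have gap : 0 <= \tr (D^T *m A *m D *m L).
  rewrite mxtrace_mul_diag ?nnegL.1 //; apply: sumr_ge0 => i _.
  exact: mulr_ge0 (psd_mx_conj_diag_ge0 D i) (nnegL.2 i).
rewrite cross1 cross2; lra.
Qed.

End Convexity.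

Section Procrustes.
Variables (R : realFieldType) (n d : nat).

Lemma orthonormal_cross_diag_le1 (W B : 'M[R]_(n, d)) i :
  W^T *m W = 1%:M -> B^T *m B = 1%:M -> (W^T *m B) i i <= 1.
Proof.
have colE (X Y : 'M[R]_(n, d)) : (X^T *m Y) i i = \sum_j X j i * Y j i.
  by rewrite mxE; apply: eq_bigr => j _; rewrite mxE.
have unit_col (X : 'M[R]_(n, d)) : X^T *m X = 1%:M -> (X^T *m X) i i = 1.
  by move->; rewrite mxE eqxx.
move=> HW HB.
have : 0 <= \sum_j (W j i - B j i) ^+ 2 by apply: sumr_ge0 => j _; exact: sqr_ge0.
have -> : \sum_j (W j i - B j i) ^+ 2
    = (W^T *m W) i i + (B^T *m B) i i - 2 * (W^T *m B) i i.
  rewrite !colE mulr_sumr -big_split -sumrB.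
  by apply: eq_bigr => j _; rewrite /=; ring.
rewrite !unit_col //; lra.
Qed.

Lemma procrustes_mxtrace_le (U B : 'M[R]_(n, d)) (S C : 'M[R]_d) :
  U^T *m U = 1%:M -> B^T *m B = 1%:M -> C^T *m C = 1%:M -> diag_nonneg S ->
  \tr (U^T *m (B *m S *m C^T)) <= \tr ((B *m C^T)^T *m (B *m S *m C^T)).
Proof.
move=> HU HB HC [HS HS0].
have -> : \tr ((B *m C^T)^T *m (B *m S *m C^T)) = \tr S.
  rewrite trmx_mul trmxK !mulmxA -(mulmxA C B^T B) HB mulmx1.
  by rewrite [LHS]mxtrace_mulC mulmxA HC mul1mx.
have -> : \tr (U^T *m (B *m S *m C^T)) = \sum_i ((U *m C)^T *m B) i i * S i i.
  by rewrite !mulmxA [LHS]mxtrace_mulC !mulmxA mxtrace_mul_diag // trmx_mul.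
rewrite /mxtrace; apply: ler_sum => i _.
have := orthonormal_cross_diag_le1 i (orthonormal_mulmx HU HC) HB.
have := HS0 i; nra.
Qed.

End Procrustes.

Theorem proposition2 (R : realFieldType) (n d K : nat)
  (hd : (1 <= d)%N) (hnd : (d <= n)%N) (hK : (1 <= K)%N)
  (A : 'I_K -> 'M[R]_n) (Lam : 'I_K -> 'M[R]_d)
  (Uold : 'M[R]_(n, d)) (B : 'M[R]_(n, d)) (Sig C : 'M[R]_d) :
  (forall k, psd_mx (A k)) ->
  (forall k, diag_nonneg (Lam k)) ->
  Uold^T *m Uold = 1%:M ->
  B^T *m B = 1%:M ->
  C^T *m C = 1%:M ->
  C *m C^T = 1%:M ->
  diag_nonneg Sig ->
  \sum_(k < K) A k *m Uold *m Lam k = B *m Sig *m C^T ->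
  let Unew := B *m C^T in
  Unew^T *m Unew = 1%:M /\
  \sum_(k < K) frob2 (A k - Unew *m Lam k *m Unew^T)
    <= \sum_(k < K) frob2 (A k - Uold *m Lam k *m Uold^T).
Proof.
move=> HA HL HUold HB HC HC' HSig HM Unew.
have HUnew : Unew^T *m Unew = 1%:M by apply: orthonormal_mulmx; rewrite ?trmxK.
split=> //.
have expand U : U^T *m U = 1%:M ->
    \sum_(k < K) frob2 (A k - U *m Lam k *m U^T)
    = \sum_k \tr (A k *m A k) - 2 * \sum_k \tr (U^T *m A k *m U *m Lam k)
      + \sum_k \tr (Lam k *m Lam k).
  move=> HU; rewrite mulr_sumr -sumrB -big_split /=.
  apply: eq_bigr => k _; rewrite frob2_sub_orthonormal_conj ?(HA k).1 //.
  exact/diag_mx_tr/(HL k).1.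
rewrite expand // [leRHS]expand //.
have tangent : \sum_k \tr (Uold^T *m A k *m Uold *m Lam k)
      + 2 * \tr ((Unew - Uold)^T *m (B *m Sig *m C^T))
    <= \sum_k \tr (Unew^T *m A k *m Unew *m Lam k).
  rewrite -HM mulmx_sumr raddf_sum mulr_sumr -big_split /=.
  by apply: ler_sum => k _; exact: mxtrace_conj_tangent_le.
have procrustes := procrustes_mxtrace_le HUold HB HC HSig.
rewrite [(_ - _)^T]linearB /= mulmxBl linearB /= in tangent; lra.
Qed.
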